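(* If $(T,d_T)$ is an $\mathbb{R}$-tree (possibly non-separable), then $\Delta_T^{(c)}(R)\leq 2R$ for all $R\in[0,\infty)$. Consequently, for every $\varepsilon>0$, every $\mathbb{R}$-tree $(4+\varepsilon)$-Lipschitz embeds into $c_0^+(\kappa)$ for some cardinal $\kappa$.
   Context: A metric space $(T,d_T)$ is an $\mathbb{R}$-tree if (i) for any $s,t\in T$ there is a unique isometric embedding $\phi_{s,t}\colon[0,d_T(s,t)]\to T$ with $\phi_{s,t}(0)=s$ and $\phi_{s,t}(d_T(s,t))=t$; and (ii) any injective continuous map $\varphi\colon[0,1]\to T$ has the same range as $\phi_{\varphi(0),\varphi(1)}$. For a cover $\mathcal{U}$ of $T$: $\mathrm{diam}(\mathcal{U})=\sup_{U\in\mathcal{U}}\mathrm{diam}(U)$; $\mathcal{L}(\mathcal{U})=\sup\{d\in[0,\infty): \text{every } E\subseteq T \text{ with } \mathrm{diam}(E)<d \text{ is contained in some } U\in\mathcal{U}\}$; point-finite means each point lies in only finitely many members. $\Delta_T^{(c)}(R)=\inf\{\mathrm{diam}(\mathcal{U}): \mathcal{U} \text{ point-finite cover of } T,\ \mathcal{L}(\mathcal{U})\geq R\}$. For a cardinal $\kappa$, $c_0^+(\kappa)$ is the set of nonnegative real families $(x_\xi)_{\xi<\kappa}$ with $\{\xi: x_\xi>\eta\}$ finite for every $\eta>0$, with the sup metric. A $K$-Lipschitz embedding is an injective $f$ with $\mathrm{Lip}(f)\mathrm{Lip}(f^{-1})\leq K$. *)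

From Stdlib Require Import Reals List.
From Coquelicot Require Import Coquelicot.
Open Scope R_scope.

Section Defs.
Context {T : Type} (d : T -> T -> R).

Definition is_metric : Prop :=
  (forall x y, 0 <= d x y) /\
  (forall x y, d x y = 0 <-> x = y) /\
  (forall x y, d x y = d y x) /\
  (forall x y z, d x z <= d x y + d y z).

Definition geodesic (s t : T) (phi : R -> T) : Prop :=
  phi 0 = s /\ phi (d s t) = t /\
  (forall u v, 0 <= u <= d s t -> 0 <= v <= d s t ->
     d (phi u) (phi v) = Rabs (u - v)).

Definition continuous_on01 (phi : R -> T) : Prop :=
  forall u, 0 <= u <= 1 -> forall e, 0 < e -> exists del, 0 < del /\
    forall v, 0 <= v <= 1 -> Rabs (v - u) < del -> d (phi v) (phi u) < e.

Definition injective_on01 (phi : R -> T) : Prop :=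
  forall u v, 0 <= u <= 1 -> 0 <= v <= 1 -> phi u = phi v -> u = v.

Definition is_R_tree : Prop :=
  (forall s t, exists phi, geodesic s t phi /\
     forall psi, geodesic s t psi -> forall u, 0 <= u <= d s t -> psi u = phi u) /\
  (forall phi : R -> T, continuous_on01 phi -> injective_on01 phi ->
     forall psi, geodesic (phi 0) (phi 1) psi ->
     forall x, (exists u, 0 <= u <= 1 /\ phi u = x) <->
               (exists u, 0 <= u <= d (phi 0) (phi 1) /\ psi u = x)).

(* diameter of a set (diam of the empty set is 0) *)
Definition diam (E : T -> Prop) : Rbar :=
  Lub_Rbar (fun r => r = 0 \/ exists x y, E x /\ E y /\ r = d x y).

Definition is_cover (U : (T -> Prop) -> Prop) : Prop :=
  forall x, exists A, U A /\ A x.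

Definition point_finite (U : (T -> Prop) -> Prop) : Prop :=
  forall x, exists l : list (T -> Prop), forall A, U A -> A x -> In A l.

Definition cover_diam (U : (T -> Prop) -> Prop) : Rbar :=
  Rbar_lub (fun r => exists A, U A /\ r = diam A).

Definition lebesgue (U : (T -> Prop) -> Prop) : Rbar :=
  Lub_Rbar (fun r => 0 <= r /\
    forall E : T -> Prop, Rbar_lt (diam E) (Finite r) ->
      exists A, U A /\ forall x, E x -> A x).

Definition Delta_c (Rr : R) : Rbar :=
  Rbar_glb (fun r => exists U, is_cover U /\ point_finite U /\
              Rbar_le (Finite Rr) (lebesgue U) /\ r = cover_diam U).
End Defs.

Definition in_c0plus {K : Type} (x : K -> R) : Prop :=
  (forall k, 0 <= x k) /\
  (forall eta, 0 < eta -> exists l : list K, forall k, x k > eta -> In k l).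

Definition c0dist {K : Type} (x y : K -> R) : R :=
  real (Lub_Rbar (fun r => exists k, r = Rabs (x k - y k))).

From Stdlib Require Import Reals List Lra Lia ClassicalEpsilon Classical.
From Coquelicot Require Import Coquelicot.
Open Scope R_scope.

(* Fix a base point [o], write [|x| = d o x] and [(x|y)] for the Gromov product at [o].
   In an R-tree [(x|y)] is the height at which the geodesics from [o] to [x] and [y]
   branch apart; hence [(x|z) >= min((x|y), (y|z))], and everything else only uses this
   inequality together with the existence of geodesics from [o].
   For [Delta_c], cover by the cones [{x >= q : |x| < |q| + R + 2g}] over the points [q]
   at heights in [g N]: they have diameter at most [2R + 4g] and Lebesgue number at least
   [R], and a point lies in at most one cone per height below it.
   For the embedding, use [|x|] and the coordinates [min (d p x) (C 2^n)] for the points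
   [p <= x] at heights in [2^n N]. They are 1-Lipschitz, and a point [p <= x] just above
   the branch point of [x] and [y], at the scale [2^n ~ (|x| - (x|y)) / (C + 1)],
   separates [x] from [y] up to the factor [4 + 4 / C]. *)

Definition listable {A : Type} (P : A -> Prop) : Prop :=
  exists l : list A, forall a, P a -> In a l.

Section Listable.
Context {A : Type}.

Lemma listable_subsingleton (P : A -> Prop) :
  (forall a b, P a -> P b -> a = b) -> listable P.
Proof.
  intros H. destruct (classic (exists a, P a)) as [[a Ha]|Hn].
  - exists (a :: nil). intros b Hb. left. apply H; auto.
  - exists nil. intros b Hb. apply Hn. eauto.
Qed.

Lemma listable_mono (P Q : A -> Prop) : (forall a, P a -> Q a) -> listable Q -> listable P.
Proof. intros H [l Hl]. exists l. auto. Qed.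

Lemma listable_or (P Q : A -> Prop) :
  listable P -> listable Q -> listable (fun a => P a \/ Q a).
Proof.
  intros [l1 H1] [l2 H2]. exists (l1 ++ l2). intros a [Ha|Ha]; apply in_or_app; auto.
Qed.

Lemma listable_bigunion {I : Type} (J : I -> Prop) (P : I -> A -> Prop) :
  listable J -> (forall i, J i -> listable (P i)) ->
  listable (fun a => exists i, J i /\ P i a).
Proof.
  intros [l Hl] HP.
  enough (H : listable (fun a => exists i, In i l /\ J i /\ P i a)).
  { revert H. apply listable_mono. intros a (i & Ji & Pa). eauto. }
  clear Hl. induction l as [|i l [m Hm]].
  - exists nil. intros a (i & [] & _).
  - destruct (classic (J i)) as [Ji|nJi].
    + destruct (HP i Ji) as [m' Hm']. exists (m' ++ m).
      intros a (j & [<-|Hj] & Jj & Pa); apply in_or_app; eauto 6.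
    + exists m. intros a (j & [<-|Hj] & Jj & Pa); [contradiction|eauto 6].
Qed.

End Listable.

Lemma listable_nat_le (N : nat) : listable (fun i => (i <= N)%nat).
Proof. exists (seq 0 (S N)). intros i Hi. apply in_seq. lia. Qed.

Lemma listable_Z_range (a b : Z) : listable (fun n => (a <= n <= b)%Z).
Proof.
  exists (map (fun i => a + Z.of_nat i)%Z (seq 0 (S (Z.to_nat (b - a))))).
  intros n Hn. apply in_map_iff. exists (Z.to_nat (n - a)).
  split; [lia|apply in_seq; lia].
Qed.

Lemma Rbar_glb_le (P : Rbar -> Prop) x : P x -> Rbar_le (Rbar_glb P) x.
Proof. intros Hx. apply (proj2_sig (Rbar_ex_glb P)). exact Hx. Qed.

Lemma Rbar_lub_le (P : Rbar -> Prop) b :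
  (forall x, P x -> Rbar_le x b) -> Rbar_le (Rbar_lub P) b.
Proof. intros Hb. apply (proj2_sig (Rbar_ex_lub P)). exact Hb. Qed.

Lemma Rbar_le_of_le_plus x a :
  (forall g, 0 < g -> Rbar_le x (Finite (a + g))) -> Rbar_le x (Finite a).
Proof.
  destruct x as [v| |]; simpl; intros H; auto.
  - apply Rnot_lt_le. intros Hv. specialize (H ((v - a) / 2)). lra.
  - apply (H 1). lra.
Qed.

Lemma floor_mult x g : 0 <= x -> 0 < g -> exists k : nat, INR k * g <= x < INR k * g + g.
Proof.
  intros Hx Hg. destruct (nfloor_ex (x / g)) as [k [Hk1 Hk2]].
  { apply Rdiv_le_0_compat; lra. }
  exists k. assert (x / g * g = x) by (field; lra). nra.
Qed.

Lemma Rabs_Rmin_sub_le a b c : Rabs (Rmin a c - Rmin b c) <= Rabs (a - b).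
Proof.
  unfold Rmin. destruct (Rle_dec a c), (Rle_dec b c); split_Rabs; lra.
Qed.

Lemma approx_inf (P : R -> Prop) g : 0 < g -> (exists r, P r) -> (forall r, P r -> 0 <= r) ->
  exists m, 0 <= m /\ (forall r, P r -> m <= r) /\ exists r, P r /\ r < m + g.
Proof.
  intros Hg [r0 Hr0] Hpos.
  set (lower := fun m => forall r, P r -> m <= r).
  destruct (completeness lower) as [m [Hub Hlst]].
  - exists r0. intros m Hm. apply Hm, Hr0.
  - exists 0. intros r. apply Hpos.
  - exists m. split; [apply Hub; intros r Hr; apply Hpos, Hr|split].
    + intros r Hr. apply Hlst. intros m' Hm'. apply Hm', Hr.
    + apply NNPP. intros Hn.
      assert (m + g <= m); [|lra].
      apply Hub. intros r Hr. apply Rnot_lt_le. intros Hlt. eauto.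
Qed.

Definition dyadic (n : Z) : R := Rpower 2 (IZR n).

Lemma dyadic_pos n : 0 < dyadic n.
Proof. apply exp_pos. Qed.

Lemma dyadic_succ n : dyadic (n + 1) = 2 * dyadic n.
Proof. unfold dyadic. rewrite plus_IZR, Rpower_plus, Rpower_1; lra. Qed.

Lemma dyadic_le n m : (n <= m)%Z -> dyadic n <= dyadic m.
Proof. intros H. apply Rle_Rpower; [lra|]. apply IZR_le, H. Qed.

Lemma dyadic_lt_inv n m : dyadic n < dyadic m -> (n < m)%Z.
Proof.
  intros H. apply Z.nle_gt. intros Hmn. apply dyadic_le in Hmn. lra.
Qed.

Lemma dyadic_bracket s : 0 < s -> exists n, dyadic n <= s <= 2 * dyadic n.
Proof.
  intros Hs. set (r := Rlog 2 s).
  assert (Hr : Rpower 2 r = s) by (apply Rpower_Rlog; lra).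
  destruct (archimed r) as [H1 H2].
  exists (up r - 1)%Z. rewrite <- dyadic_succ, Z.sub_add. unfold dyadic.
  rewrite <- Hr. split; apply Rle_Rpower; try lra.
  rewrite minus_IZR. lra.
Qed.

Lemma c0dist_le {K : Type} (x y : K -> R) B :
  0 <= B -> (forall k, Rabs (x k - y k) <= B) -> c0dist x y <= B.
Proof.
  intros HB H. unfold c0dist.
  assert (Hle : Rbar_le (Lub_Rbar (fun r => exists k, r = Rabs (x k - y k))) (Finite B)).
  { apply Lub_Rbar_correct. intros r [k ->]. apply H. }
  destruct Lub_Rbar; simpl in *; tauto.
Qed.

(* The boundedness hypothesis matters: [c0dist] is 0 when the differences are unbounded. *)
Lemma c0dist_ge {K : Type} (x y : K -> R) B k :
  (forall k, Rabs (x k - y k) <= B) -> Rabs (x k - y k) <= c0dist x y.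
Proof.
  intros H. unfold c0dist.
  assert (Hle : Rbar_le (Lub_Rbar (fun r => exists k, r = Rabs (x k - y k))) (Finite B)).
  { apply Lub_Rbar_correct. intros r [k' ->]. apply H. }
  assert (Hge : Rbar_le (Finite (Rabs (x k - y k)))
                        (Lub_Rbar (fun r => exists k, r = Rabs (x k - y k)))).
  { apply Lub_Rbar_correct. eauto. }
  destruct Lub_Rbar; simpl in *; tauto.
Qed.

Definition c0plus_embeddable {T : Type} (d : T -> T -> R) (D : R) : Prop :=
  exists (K : Type) (f : T -> (K -> R)),
    (forall t, in_c0plus (f t)) /\
    (forall s t, f s = f t -> s = t) /\
    exists L1 L2 : R, 0 <= L1 /\ 0 <= L2 /\ L1 * L2 <= D /\
      (forall s t, c0dist (f s) (f t) <= L1 * d s t) /\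
      (forall s t, d s t <= L2 * c0dist (f s) (f t)).

Section Covers.
Context {T : Type} (d : T -> T -> R).

Lemma dist_lt_of_diam_lt (E : T -> Prop) r x y :
  Rbar_lt (diam d E) (Finite r) -> E x -> E y -> d x y < r.
Proof.
  intros HE Ex Ey.
  assert (H : Rbar_le (Finite (d x y)) (diam d E)).
  { apply Lub_Rbar_correct. right. eauto. }
  exact (Rbar_le_lt_trans _ _ (Finite r) H HE).
Qed.

Lemma diam_le (E : T -> Prop) r :
  0 <= r -> (forall x y, E x -> E y -> d x y <= r) -> Rbar_le (diam d E) (Finite r).
Proof.
  intros Hr H. apply Lub_Rbar_correct. intros s [->|(x & y & Ex & Ey & ->)]; simpl; auto.
Qed.

Lemma cover_diam_le (U : (T -> Prop) -> Prop) b :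
  (forall A, U A -> Rbar_le (diam d A) b) -> Rbar_le (cover_diam d U) b.
Proof. intros H. apply Rbar_lub_le. intros r (A & UA & ->). auto. Qed.

Lemma lebesgue_ge (U : (T -> Prop) -> Prop) r :
  0 <= r ->
  (forall E, Rbar_lt (diam d E) (Finite r) -> exists A, U A /\ forall x, E x -> A x) ->
  Rbar_le (Finite r) (lebesgue d U).
Proof. intros Hr H. apply Lub_Rbar_correct. auto. Qed.

Lemma Delta_c_le_cover_diam (U : (T -> Prop) -> Prop) r :
  is_cover U -> point_finite U -> Rbar_le (Finite r) (lebesgue d U) ->
  Rbar_le (Delta_c d r) (cover_diam d U).
Proof. intros Hc Hp Hl. apply Rbar_glb_le. exists U. auto. Qed.

Lemma Delta_c_empty r : 0 <= r -> (T -> False) -> Rbar_le (Delta_c d r) (Finite 0).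
Proof.
  intros Hr Hn. set (U := fun A : T -> Prop => A = fun _ => False).
  apply Rbar_le_trans with (cover_diam d U).
  - apply Delta_c_le_cover_diam.
    + intros x. destruct (Hn x).
    + intros x. destruct (Hn x).
    + apply lebesgue_ge; auto. intros E _. exists (fun _ => False).
      split; [reflexivity|]. intros x. destruct (Hn x).
  - apply cover_diam_le. intros A _. apply diam_le; [lra|]. intros x. destruct (Hn x).
Qed.

Lemma c0plus_embeddable_empty D : 0 <= D -> (T -> False) -> c0plus_embeddable d D.
Proof.
  intros HD Hn. exists unit, (fun _ _ => 0).
  split; [intros t; destruct (Hn t)|split; [intros s; destruct (Hn s)|]].
  exists 0, 0. repeat split; try lra; intros s; destruct (Hn s).
Qed.

End Covers.

Definition gromov {T : Type} (d : T -> T -> R) (o x y : T) : R :=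
  (d o x + d o y - d x y) / 2.

Definition between {T : Type} (d : T -> T -> R) (o p x : T) : Prop :=
  d o p + d p x = d o x.

Lemma dist_gromov {T : Type} (d : T -> T -> R) o x y :
  d x y = d o x + d o y - 2 * gromov d o x y.
Proof. unfold gromov. field. Qed.

Lemma between_iff_gromov {T : Type} (d : T -> T -> R) o p x :
  between d o p x <-> gromov d o p x = d o p.
Proof. unfold between. rewrite (dist_gromov d o p x). lra. Qed.

Section Metric.
Context {T : Type} (d : T -> T -> R) (Hm : is_metric d).

Lemma d_nonneg x y : 0 <= d x y. Proof. apply Hm. Qed.
Lemma d_refl x : d x x = 0. Proof. apply Hm. reflexivity. Qed.
Lemma d_eq0 x y : d x y = 0 -> x = y. Proof. apply Hm. Qed.
Lemma d_sym x y : d x y = d y x. Proof. apply Hm. Qed.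
Lemma d_tri x y z : d x z <= d x y + d y z. Proof. apply Hm. Qed.

Lemma Rabs_dist_sub_le p x y : Rabs (d p x - d p y) <= d x y.
Proof.
  pose proof (d_tri p x y). pose proof (d_tri p y x). rewrite (d_sym y x) in *.
  apply Rabs_le. lra.
Qed.

Variable o : T.

Lemma gromov_sym x y : gromov d o x y = gromov d o y x.
Proof. unfold gromov. rewrite (d_sym x y). field. Qed.

Lemma gromov_le_l x y : gromov d o x y <= d o x.
Proof. unfold gromov. pose proof (d_tri o x y). lra. Qed.

Lemma gromov_le_r x y : gromov d o x y <= d o y.
Proof. rewrite gromov_sym. apply gromov_le_l. Qed.

Lemma gromov_nonneg x y : 0 <= gromov d o x y.
Proof. unfold gromov. pose proof (d_tri x o y). rewrite (d_sym x o) in *. lra. Qed.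

Lemma gromov_self x : gromov d o x x = d o x.
Proof. unfold gromov. rewrite d_refl. field. Qed.

Lemma height_le_dist_gromov x y : d o x <= d x y + gromov d o x y.
Proof. pose proof (dist_gromov d o x y). pose proof (gromov_le_r x y). lra. Qed.

End Metric.

Definition zero_hyperbolic_at {T : Type} (d : T -> T -> R) (o : T) : Prop :=
  forall x y z, Rmin (gromov d o x y) (gromov d o y z) <= gromov d o x z.

Definition has_segments_from {T : Type} (d : T -> T -> R) (o : T) : Prop :=
  forall x t, 0 <= t <= d o x -> exists p, d o p = t /\ d p x = d o x - t.

Section ZeroHyperbolic.
Context {T : Type} (d : T -> T -> R) (Hm : is_metric d) (o : T)
  (Hhyp : zero_hyperbolic_at d o) (Hseg : has_segments_from d o).

Local Notation h := (d o).
Local Notation gp := (gromov d o).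
Local Notation below := (between d o).

Lemma gromov_ge_min t x y z : t <= gp x y -> t <= gp y z -> t <= gp x z.
Proof. intros H1 H2. eapply Rle_trans; [|apply (Hhyp x y z)]. apply Rmin_glb; auto. Qed.

Lemma below_exists x t : 0 <= t <= h x -> exists q, h q = t /\ below q x.
Proof.
  intros Ht. destruct (Hseg x t Ht) as (q & Hq & Hqx).
  exists q. unfold between. split; lra.
Qed.

Lemma below_of_gromov_ge q x y : below q y -> h q <= gp x y -> below q x.
Proof.
  intros Hq Hle. apply (between_iff_gromov d o) in Hq. apply (between_iff_gromov d o).
  apply Rle_antisym; [apply (gromov_le_l d Hm)|].
  apply gromov_ge_min with y; [|rewrite (gromov_sym d Hm)]; lra.
Qed.

Lemma gromov_ge_below q x y : below q x -> below q y -> h q <= gp x y.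
Proof.
  intros Hx Hy. apply (between_iff_gromov d o) in Hx, Hy.
  apply gromov_ge_min with q; [rewrite (gromov_sym d Hm)|]; lra.
Qed.

Lemma below_unique p q x : below p x -> below q x -> h p = h q -> p = q.
Proof.
  intros Hp Hq E. apply (d_eq0 d Hm).
  apply (between_iff_gromov d o) in Hp, Hq.
  assert (h p <= gp p q) by (apply gromov_ge_min with x; [|rewrite (gromov_sym d Hm)]; lra).
  pose proof (dist_gromov d o p q). pose proof (d_nonneg d Hm p q).
  pose proof (gromov_le_r d Hm o p q). lra.
Qed.

Lemma dist_below_le p x y : below p x -> ~ below p y -> d p x <= d x y.
Proof.
  intros Hx Hny.
  assert (Hlt : gp x y < h p).
  { apply Rnot_le_lt. intros Hle. apply Hny.
    apply below_of_gromov_ge with x; [auto|]. rewrite (gromov_sym d Hm). auto. }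
  pose proof (dist_gromov d o x y). pose proof (gromov_le_r d Hm o x y).
  unfold between in Hx. lra.
Qed.

Section Cover.
Variables (r g : R).
Hypotheses (Hr : 0 <= r) (Hg : 0 < g).

Definition cone_cell (q x : T) : Prop := below q x /\ h x < h q + r + 2 * g.

Definition cell_cover (A : T -> Prop) : Prop :=
  exists q (k : nat), h q = INR k * g /\ A = cone_cell q.

Lemma cell_cover_is_cover : is_cover cell_cover.
Proof.
  intros x. destruct (floor_mult (h x) g (d_nonneg d Hm o x) Hg) as [k Hk].
  destruct (below_exists x (INR k * g)) as (q & Hq & Hqx).
  { pose proof (pos_INR k). split; nra. }
  exists (cone_cell q). split; [exists q, k; auto|split; [auto|lra]].
Qed.

Lemma cell_cover_point_finite : point_finite cell_cover.
Proof.
  intros x. destruct (floor_mult (h x) g (d_nonneg d Hm o x) Hg) as [M HM].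
  assert (Hfin : listable (fun A => exists k, (k <= M)%nat /\
                   exists q, h q = INR k * g /\ below q x /\ A = cone_cell q)).
  { apply listable_bigunion; [apply listable_nat_le|]. intros k _.
    apply listable_subsingleton. intros A B (q & Hq & Hqx & ->) (q' & Hq' & Hq'x & ->).
    f_equal. apply below_unique with x; auto. lra. }
  destruct Hfin as [l Hl]. exists l. intros A (q & k & Hk & ->) [Hqx _]. apply Hl.
  exists k. split; [|eauto].
  assert (Hkx : INR k * g <= h x).
  { unfold between in Hqx. pose proof (d_nonneg d Hm q x). lra. }
  assert (Hlt : INR k < INR (S M)) by (rewrite S_INR; apply Rmult_lt_reg_r with g; lra).
  apply INR_lt in Hlt. lia.
Qed.

Lemma cell_cover_lebesgue : Rbar_le (Finite r) (lebesgue d cell_cover).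
Proof.
  apply lebesgue_ge; [exact Hr|]. intros E HE.
  destruct (classic (exists e, E e)) as [[e He]|Hempty].
  2: { exists (cone_cell o). split.
       - exists o, 0%nat. rewrite (d_refl d Hm). split; [simpl; ring|reflexivity].
       - intros x Ex. exfalso. eauto. }
  destruct (approx_inf (fun s => exists x, E x /\ s = gp x e) g Hg)
    as (mu & Hmu0 & Hmu & s & (y & Ey & ->) & Hy).
  { eauto. }
  { intros s (x & _ & ->). apply (gromov_nonneg d Hm). }
  destruct (floor_mult mu g Hmu0 Hg) as [k Hk].
  destruct (below_exists e (INR k * g)) as (q & Hq & Hqe).
  { pose proof (pos_INR k). pose proof (Hmu _ (ex_intro _ e (conj He eq_refl))).
    rewrite (gromov_self d Hm) in *. split; nra. }
  exists (cone_cell q). split; [exists q, k; auto|]. intros x Ex.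
  pose proof (Hmu _ (ex_intro _ x (conj Ex eq_refl))) as Hxe.
  split; [apply below_of_gromov_ge with e; auto; lra|].
  (* Either [e] or [y] has a small Gromov product with [x]: otherwise hyperbolicity
     would make [gp y e] too large. *)
  assert (Hz : exists z, E z /\ gp x z < mu + g).
  { destruct (Rlt_le_dec (gp x e) (mu + g)) as [Hlt|Hge]; [eauto|].
    exists y. split; auto. apply Rnot_le_lt. intros Hge'.
    assert (mu + g <= gp y e) by (apply gromov_ge_min with x; [rewrite (gromov_sym d Hm)|]; lra).
    lra. }
  destruct Hz as (z & Ez & Hz).
  pose proof (dist_lt_of_diam_lt d E r x z HE Ex Ez).
  pose proof (height_le_dist_gromov d Hm o x z). lra.
Qed.

Lemma cell_cover_diam : Rbar_le (cover_diam d cell_cover) (Finite (2 * r + 4 * g)).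
Proof.
  apply cover_diam_le. intros A (q & k & _ & ->). apply diam_le; [lra|].
  intros x y [Hqx Hx] [Hqy Hy].
  pose proof (gromov_ge_below q x y Hqx Hqy). pose proof (dist_gromov d o x y). lra.
Qed.

End Cover.

Lemma zero_hyperbolic_Delta_c r : 0 <= r -> Rbar_le (Delta_c d r) (Finite (2 * r)).
Proof.
  intros Hr. apply Rbar_le_of_le_plus. intros g Hg.
  replace (2 * r + g) with (2 * r + 4 * (g / 4)) by field.
  apply Rbar_le_trans with (cover_diam d (cell_cover r (g / 4))).
  - apply Delta_c_le_cover_diam;
      [apply cell_cover_is_cover|apply cell_cover_point_finite|apply cell_cover_lebesgue]; lra.
  - apply cell_cover_diam; lra.
Qed.

Section Embedding.
Variable C : R.
Hypothesis HC : 0 < C.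

Definition dyadic_level (n : Z) (p : T) : Prop :=
  exists k : nat, (1 <= k)%nat /\ h p = INR k * dyadic n.

Definition dyadic_coord (n : Z) (p x : T) : R :=
  if excluded_middle_informative (dyadic_level n p /\ below p x)
  then Rmin (d p x) (C * dyadic n) else 0.

Definition dyadic_embedding (x : T) (k : option (Z * T)) : R :=
  match k with None => h x | Some (n, p) => dyadic_coord n p x end.

Lemma dyadic_embedding_nonneg x k : 0 <= dyadic_embedding x k.
Proof.
  destruct k as [[n p]|]; simpl; [|apply (d_nonneg d Hm)].
  unfold dyadic_coord. destruct excluded_middle_informative; [|lra].
  apply Rmin_glb; [apply (d_nonneg d Hm)|]. pose proof (dyadic_pos n). nra.
Qed.

Lemma dyadic_embedding_lipschitz x y k :
  Rabs (dyadic_embedding x k - dyadic_embedding y k) <= d x y.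
Proof.
  destruct k as [[n p]|]; simpl; [|apply (Rabs_dist_sub_le d Hm)].
  assert (Hmin : forall z, 0 <= Rmin (d p z) (C * dyadic n)).
  { intros z. apply Rmin_glb; [apply (d_nonneg d Hm)|]. pose proof (dyadic_pos n). nra. }
  unfold dyadic_coord.
  destruct excluded_middle_informative as [[Hn Hx]|Hnx];
  destruct excluded_middle_informative as [[Hn' Hy]|Hny].
  - eapply Rle_trans; [apply Rabs_Rmin_sub_le|apply (Rabs_dist_sub_le d Hm)].
  - rewrite Rminus_0_r, Rabs_pos_eq by apply Hmin.
    eapply Rle_trans; [apply Rmin_l|]. apply dist_below_le; tauto.
  - rewrite Rminus_0_l, Rabs_Ropp, Rabs_pos_eq by apply Hmin.
    eapply Rle_trans; [apply Rmin_l|]. rewrite (d_sym d Hm x y). apply dist_below_le; tauto.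
  - rewrite Rminus_0_r, Rabs_R0. apply (d_nonneg d Hm).
Qed.

Lemma separating_point x y n :
  gp x y + dyadic n <= h x ->
  exists p, dyadic_level n p /\ below p x /\ ~ below p y /\ h x - gp x y - dyadic n <= d p x.
Proof.
  intros Hroom. pose proof (dyadic_pos n) as Hdel.
  destruct (floor_mult (gp x y) (dyadic n) (gromov_nonneg d Hm o x y) Hdel) as [m Hfl].
  destruct (below_exists x (INR (S m) * dyadic n)) as (p & Hp & Hpx).
  { rewrite S_INR. pose proof (pos_INR m). split; nra. }
  exists p. split; [exists (S m); split; [lia|exact Hp]|split; [exact Hpx|split]].
  - intros Hpy. pose proof (gromov_ge_below p x y Hpx Hpy). rewrite S_INR in Hp. lra.
  - unfold between in Hpx. rewrite S_INR in Hp. lra.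
Qed.

Lemma dyadic_embedding_separates_ordered x y :
  h y <= h x ->
  exists k, d x y <= (4 + 4 / C) * Rabs (dyadic_embedding x k - dyadic_embedding y k).
Proof.
  intros Hxy. set (A := h x - gp x y).
  assert (HL : 0 < 4 / C) by (apply Rdiv_lt_0_compat; lra).
  assert (Hd2A : d x y <= 2 * A).
  { pose proof (dist_gromov d o x y). pose proof (gromov_le_r d Hm o x y). unfold A. lra. }
  destruct (Rle_lt_dec A 0) as [HA|HA].
  { exists None. pose proof (Rabs_pos (dyadic_embedding x None - dyadic_embedding y None)). nra. }
  (* The scale [s] balances the two terms of the [Rmin] in [dyadic_coord]. *)
  set (s := A / (C + 1)).
  assert (Hs : 0 < s <= A).
  { unfold s. split; [apply Rdiv_lt_0_compat; lra|].
    apply Rle_div_l; nra. }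
  destruct (dyadic_bracket s) as [n [Hn1 Hn2]]; [lra|].
  destruct (separating_point x y n) as (p & Hlev & Hpx & Hpy & Hdp); [unfold A in *; lra|].
  exists (Some (n, p)). simpl. unfold dyadic_coord.
  destruct excluded_middle_informative as [_|Hnot]; [|tauto].
  destruct excluded_middle_informative as [[_ Hy]|_]; [contradiction|].
  assert (Hlow : A * C / (2 * (C + 1)) <= Rmin (d p x) (C * dyadic n)).
  { apply Rmin_glb.
    - replace (A * C / (2 * (C + 1))) with ((A - s) / 2) by (unfold s; field; lra).
      unfold A in *. lra.
    - replace (A * C / (2 * (C + 1))) with (C * (s / 2)) by (unfold s; field; lra).
      apply Rmult_le_compat_l; lra. }
  assert (Hlow0 : 0 <= A * C / (2 * (C + 1))).
  { apply Rdiv_le_0_compat; nra. }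
  rewrite Rminus_0_r, Rabs_pos_eq by lra.
  replace (2 * A) with ((4 + 4 / C) * (A * C / (2 * (C + 1)))) in Hd2A by (field; lra).
  eapply Rle_trans; [exact Hd2A|]. apply Rmult_le_compat_l; lra.
Qed.

Lemma dyadic_embedding_separates x y :
  exists k, d x y <= (4 + 4 / C) * Rabs (dyadic_embedding x k - dyadic_embedding y k).
Proof.
  destruct (Rle_lt_dec (h y) (h x)) as [H|H].
  - now apply dyadic_embedding_separates_ordered.
  - destruct (dyadic_embedding_separates_ordered y x) as [k Hk]; [lra|].
    exists k. rewrite (d_sym d Hm x y), Rabs_minus_sym. exact Hk.
Qed.

Lemma dyadic_embedding_c0 x eta :
  0 < eta -> listable (fun k => dyadic_embedding x k > eta).
Proof.
  intros Heta.
  destruct (dyadic_bracket (eta / C)) as [N0 [HN0 _]]; [apply Rdiv_lt_0_compat; lra|].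
  destruct (dyadic_bracket (h x + 1)) as [N1 [_ HN1]].
  { pose proof (d_nonneg d Hm o x). lra. }
  rewrite <- dyadic_succ in HN1.
  pose proof (dyadic_pos N0) as HN0pos.
  destruct (nfloor_ex (h x / dyadic N0)) as [M [_ HM]].
  { apply Rdiv_le_0_compat; [apply (d_nonneg d Hm)|exact HN0pos]. }
  assert (Hfin : listable (fun k => k = None \/
            exists n, (N0 <= n <= N1 + 1)%Z /\ exists j, (j <= M)%nat /\
            exists p, k = Some (n, p) /\ below p x /\ h p = INR j * dyadic n)).
  { apply listable_or; [apply listable_subsingleton; congruence|].
    apply listable_bigunion; [apply listable_Z_range|]. intros n _.
    apply listable_bigunion; [apply listable_nat_le|]. intros j _.
    apply listable_subsingleton. intros a b (p & -> & Hpx & Hp) (q & -> & Hqx & Hq).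
    do 2 f_equal. apply below_unique with x; auto. lra. }
  revert Hfin. apply listable_mono.
  intros [[n p]|] Hk; [right|left; reflexivity].
  simpl in Hk. unfold dyadic_coord in Hk.
  destruct excluded_middle_informative as [[[j [Hj Hp]] Hpx]|_]; [|lra].
  assert (H1 : eta < d p x) by (eapply Rlt_le_trans; [exact Hk|apply Rmin_l]).
  assert (H2 : eta < C * dyadic n) by (eapply Rlt_le_trans; [exact Hk|apply Rmin_r]).
  assert (Hj1 : 1 <= INR j) by (apply (le_INR 1); exact Hj).
  pose proof (dyadic_pos n).
  assert (Hhp : h p < h x) by (unfold between in Hpx; lra).
  assert (HnN1 : (n < N1 + 1)%Z) by (apply dyadic_lt_inv; nra).
  assert (HN0n : (N0 < n)%Z).
  { apply dyadic_lt_inv. apply Rle_lt_trans with (eta / C); [exact HN0|].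
    apply Rlt_div_l; lra. }
  assert (HjM : (j <= M)%nat).
  { assert (Hjx : INR j <= h x / dyadic N0).
    { apply Rle_div_r; [exact HN0pos|].
      pose proof (dyadic_le N0 n ltac:(lia)). nra. }
    assert (Hlt : INR j < INR (S M)) by (rewrite S_INR; lra).
    apply INR_lt in Hlt. lia. }
  exists n. split; [lia|]. exists j. split; [exact HjM|]. exists p. auto.
Qed.

Lemma dyadic_embedding_c0plus : c0plus_embeddable d (4 + 4 / C).
Proof.
  assert (HL : 0 < 4 / C) by (apply Rdiv_lt_0_compat; lra).
  assert (Hsep : forall s t,
            d s t <= (4 + 4 / C) * c0dist (dyadic_embedding s) (dyadic_embedding t)).
  { intros s t. destruct (dyadic_embedding_separates s t) as [k Hk].
    eapply Rle_trans; [exact Hk|]. apply Rmult_le_compat_l; [lra|].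
    apply c0dist_ge with (d s t). intros k'. apply dyadic_embedding_lipschitz. }
  exists (option (Z * T)), dyadic_embedding. split; [|split].
  - intros x. split; [apply dyadic_embedding_nonneg|apply dyadic_embedding_c0].
  - intros s t E. apply (d_eq0 d Hm).
    assert (Hself : c0dist (dyadic_embedding t) (dyadic_embedding t) <= 0).
    { apply c0dist_le; [lra|]. intros k. rewrite Rminus_diag, Rabs_R0. lra. }
    pose proof (Hsep s t) as Hst. rewrite E in Hst.
    pose proof (d_nonneg d Hm s t). nra.
  - exists 1, (4 + 4 / C). repeat split; try lra.
    + intros s t. rewrite Rmult_1_l. apply c0dist_le; [apply (d_nonneg d Hm)|].
      intros k. apply dyadic_embedding_lipschitz.
    + exact Hsep.
Qed.

End Embedding.

End ZeroHyperbolic.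

Section RTree.
Context {T : Type} (d : T -> T -> R) (Hm : is_metric d) (Ht : is_R_tree d).

Lemma geodesic_exists x y : exists phi, geodesic d x y phi.
Proof. destruct (proj1 Ht x y) as (phi & Hphi & _). eauto. Qed.

Lemma geodesic_unique x y phi psi :
  geodesic d x y phi -> geodesic d x y psi -> forall u, 0 <= u <= d x y -> phi u = psi u.
Proof.
  intros H1 H2 u Hu. destruct (proj1 Ht x y) as (phi0 & _ & Huniq).
  rewrite (Huniq _ H1 u Hu), (Huniq _ H2 u Hu). reflexivity.
Qed.

Lemma R_tree_has_segments o : has_segments_from d o.
Proof.
  intros x t Ht0. destruct (geodesic_exists o x) as (phi & H0 & H1 & Hiso).
  exists (phi t). split.
  - replace (d o (phi t)) with (d (phi 0) (phi t)) by (rewrite H0; reflexivity).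
    rewrite Hiso by lra. split_Rabs; lra.
  - replace (d (phi t) x) with (d (phi t) (phi (d o x))) by (rewrite H1; reflexivity).
    rewrite Hiso by lra. split_Rabs; lra.
Qed.

(* The only use of axiom (ii) of R-trees. *)
Lemma arc_between (P : R -> T) (L : R) :
  0 < L ->
  (forall u v, 0 <= u <= L -> 0 <= v <= L -> d (P u) (P v) <= Rabs (u - v)) ->
  (forall u v, 0 <= u <= L -> 0 <= v <= L -> P u = P v -> u = v) ->
  forall u, 0 <= u <= L -> d (P 0) (P u) + d (P u) (P L) = d (P 0) (P L).
Proof.
  intros HL Hlip Hinj u Hu.
  set (phi := fun s => P (s * L)).
  assert (Hcont : continuous_on01 d phi).
  { intros s Hs e He. exists (e / L). split; [apply Rdiv_lt_0_compat; lra|].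
    intros v Hv Hvs. unfold phi.
    eapply Rle_lt_trans; [apply Hlip; nra|].
    rewrite <- Rmult_minus_distr_r, Rabs_mult, (Rabs_pos_eq L) by lra.
    apply Rlt_div_r; lra. }
  assert (Hinj01 : injective_on01 phi).
  { intros s v Hs Hv E. apply Hinj in E; [|nra|nra]. apply Rmult_eq_reg_r with L; lra. }
  assert (E0 : phi 0 = P 0) by (unfold phi; f_equal; ring).
  assert (E1 : phi 1 = P L) by (unfold phi; f_equal; ring).
  destruct (geodesic_exists (phi 0) (phi 1)) as [psi Hpsi].
  destruct (proj1 (proj2 Ht phi Hcont Hinj01 psi Hpsi (P u))) as (v & Hv & Hpv).
  { exists (u / L). split.
    - split; [apply Rdiv_le_0_compat; lra|]. apply Rle_div_l; lra.
    - unfold phi. f_equal. field. lra. }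
  rewrite E0, E1 in Hv, Hpsi. destruct Hpsi as (Hpsi0 & HpsiL & Hiso).
  pose proof (d_nonneg d Hm (P 0) (P L)).
  replace (d (P 0) (P u)) with (d (psi 0) (psi v)) by (rewrite Hpsi0, Hpv; reflexivity).
  replace (d (P u) (P L)) with (d (psi v) (psi (d (P 0) (P L))))
    by (rewrite Hpv, HpsiL; reflexivity).
  rewrite !Hiso by lra. split_Rabs; lra.
Qed.

Section Branch.
Variable o : T.
Local Notation h := (d o).

Definition path_to (x : T) : R -> T :=
  proj1_sig (constructive_indefinite_description _ (geodesic_exists o x)).

Lemma path_to_geodesic x : geodesic d o x (path_to x).
Proof. exact (proj2_sig (constructive_indefinite_description _ (geodesic_exists o x))). Qed.

Lemma path_to_0 x : path_to x 0 = o.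
Proof. apply path_to_geodesic. Qed.

Lemma path_to_end x : path_to x (h x) = x.
Proof. apply path_to_geodesic. Qed.

Lemma path_to_iso x u v :
  0 <= u <= h x -> 0 <= v <= h x -> d (path_to x u) (path_to x v) = Rabs (u - v).
Proof. apply path_to_geodesic. Qed.

Lemma height_path_to x t : 0 <= t <= h x -> h (path_to x t) = t.
Proof.
  intros Ht0. transitivity (d (path_to x 0) (path_to x t)); [now rewrite path_to_0|].
  rewrite path_to_iso by lra. split_Rabs; lra.
Qed.

Lemma dist_path_to_end x t : 0 <= t <= h x -> d (path_to x t) x = h x - t.
Proof.
  intros Ht0. transitivity (d (path_to x t) (path_to x (h x))); [now rewrite path_to_end|].
  rewrite path_to_iso by lra. split_Rabs; lra.
Qed.

Lemma path_to_prefix x s : 0 <= s <= h x -> geodesic d o (path_to x s) (path_to x).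
Proof.
  intros Hs. unfold geodesic. rewrite (height_path_to x s Hs).
  split; [apply path_to_0|split; [reflexivity|]].
  intros u v Hu Hv. apply path_to_iso; lra.
Qed.

Lemma path_to_agree_below x y s t :
  0 <= t <= s -> s <= h x -> s <= h y -> path_to x s = path_to y s ->
  path_to x t = path_to y t.
Proof.
  intros Hts Hx Hy E.
  pose proof (path_to_prefix x s ltac:(lra)) as Gx.
  pose proof (path_to_prefix y s ltac:(lra)) as Gy. rewrite <- E in Gy.
  apply (geodesic_unique o (path_to x s)); auto.
  rewrite height_path_to; lra.
Qed.

Definition agree x y t : Prop := 0 <= t <= h x /\ t <= h y /\ path_to x t = path_to y t.

Lemma agree_0 x y : agree x y 0.
Proof.
  pose proof (d_nonneg d Hm o x). pose proof (d_nonneg d Hm o y).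
  repeat split; try lra. now rewrite !path_to_0.
Qed.

Lemma agree_bound x y : bound (agree x y).
Proof. exists (h x). intros t (Ht0 & _). apply Ht0. Qed.

Definition branch x y : R :=
  proj1_sig (completeness (agree x y) (agree_bound x y) (ex_intro _ 0 (agree_0 x y))).

Lemma branch_lub x y : is_lub (agree x y) (branch x y).
Proof. exact (proj2_sig (completeness _ _ _)). Qed.

Lemma agree_le_branch x y t : agree x y t -> t <= branch x y.
Proof. apply branch_lub. Qed.

Lemma branch_bounds x y : 0 <= branch x y <= h x /\ branch x y <= h y.
Proof.
  destruct (branch_lub x y) as [Hub Hlst].
  repeat split.
  - apply Hub, agree_0.
  - apply Hlst. intros t (Ht0 & _). apply Ht0.
  - apply Hlst. intros t (_ & Ht0 & _). exact Ht0.
Qed.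

Lemma path_to_agree_branch x y : path_to x (branch x y) = path_to y (branch x y).
Proof.
  destruct (branch_bounds x y) as [[Hb0 Hbx] Hby].
  pose proof (agree_le_branch x y) as Hmax.
  destruct (branch_lub x y) as [_ Hlst].
  set (b := branch x y) in *.
  apply NNPP. intros Hne.
  set (e := d (path_to x b) (path_to y b)).
  assert (He : 0 < e).
  { destruct (d_nonneg d Hm (path_to x b) (path_to y b)) as [H|H]; [exact H|].
    exfalso. apply Hne, (d_eq0 d Hm), eq_sym, H. }
  (* Agreement up to a height [t] close to [b] pins the two paths within [2 (b - t)] at [b]. *)
  assert (Hnear : exists t, agree x y t /\ b - e / 2 < t).
  { apply NNPP. intros Hn. assert (b <= b - e / 2); [|lra].
    apply Hlst. intros t Ht0. apply Rnot_lt_le. intros Hlt. eauto. }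
  destruct Hnear as (t & Hag & Hlt).
  pose proof (Hmax t Hag) as Htb. destruct Hag as (Ht0 & Hty & Hagree).
  assert (Hle : e <= d (path_to x b) (path_to x t) + d (path_to y t) (path_to y b)).
  { rewrite <- Hagree. apply (d_tri d Hm). }
  rewrite !path_to_iso in Hle by lra. split_Rabs; lra.
Qed.

Definition branch_path x y (u : R) : T :=
  if Rle_dec u (h x - branch x y) then path_to x (h x - u)
  else path_to y (u - h x + 2 * branch x y).

Lemma branch_path_lipschitz x y u v :
  0 <= u <= h x + h y - 2 * branch x y -> 0 <= v <= h x + h y - 2 * branch x y ->
  d (branch_path x y u) (branch_path x y v) <= Rabs (u - v).
Proof.
  destruct (branch_bounds x y) as [[Hb0 Hbx] Hby].
  pose proof (path_to_agree_branch x y) as Hc.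
  unfold branch_path. set (b := branch x y) in *.
  assert (Hcross : forall u v, 0 <= u <= h x - b -> h x - b < v <= h x + h y - 2 * b ->
            d (path_to x (h x - u)) (path_to y (v - h x + 2 * b)) <= Rabs (u - v)).
  { intros u' v' Hu Hv.
    apply Rle_trans with (d (path_to x (h x - u')) (path_to x b)
                          + d (path_to y b) (path_to y (v' - h x + 2 * b))).
    - rewrite <- Hc. apply (d_tri d Hm).
    - rewrite !path_to_iso by lra. split_Rabs; lra. }
  intros Hu Hv. destruct (Rle_dec u (h x - b)), (Rle_dec v (h x - b)).
  - rewrite path_to_iso by lra. split_Rabs; lra.
  - apply Hcross; lra.
  - rewrite (d_sym d Hm), Rabs_minus_sym. apply Hcross; lra.
  - rewrite path_to_iso by lra. split_Rabs; lra.
Qed.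

Lemma branch_path_injective x y u v :
  0 <= u <= h x + h y - 2 * branch x y -> 0 <= v <= h x + h y - 2 * branch x y ->
  branch_path x y u = branch_path x y v -> u = v.
Proof.
  destruct (branch_bounds x y) as [[Hb0 Hbx] Hby].
  pose proof (agree_le_branch x y) as Hmax.
  unfold branch_path. set (b := branch x y) in *.
  (* Equal points have equal heights, and a common point above [b] would contradict maximality. *)
  assert (Hcross : forall u v, 0 <= u <= h x - b -> h x - b < v <= h x + h y - 2 * b ->
            path_to x (h x - u) <> path_to y (v - h x + 2 * b)).
  { intros u' v' Hu Hv E.
    assert (Hh : h (path_to x (h x - u')) = h (path_to y (v' - h x + 2 * b)))
      by now rewrite E.
    rewrite !height_path_to in Hh by lra.
    assert (h x - u' <= b); [|lra].
    apply Hmax. repeat split; try lra. rewrite E, Hh. reflexivity. }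
  intros Hu Hv E. destruct (Rle_dec u (h x - b)), (Rle_dec v (h x - b)).
  - assert (Hd : d (path_to x (h x - u)) (path_to x (h x - v)) = 0)
      by (rewrite E; apply (d_refl d Hm)).
    rewrite path_to_iso in Hd by lra. split_Rabs; lra.
  - exfalso. refine (Hcross u v _ _ E); lra.
  - exfalso. refine (Hcross v u _ _ (eq_sym E)); lra.
  - assert (Hd : d (path_to y (u - h x + 2 * b)) (path_to y (v - h x + 2 * b)) = 0)
      by (rewrite E; apply (d_refl d Hm)).
    rewrite path_to_iso in Hd by lra. split_Rabs; lra.
Qed.

Lemma dist_branch x y : d x y = h x + h y - 2 * branch x y.
Proof.
  destruct (branch_bounds x y) as [[Hb0 Hbx] Hby].
  pose proof (path_to_agree_branch x y) as Hc.
  set (b := branch x y) in *.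
  set (c := path_to x b).
  assert (Hxc : d x c = h x - b).
  { unfold c. rewrite (d_sym d Hm). apply dist_path_to_end. lra. }
  assert (Hcy : d c y = h y - b).
  { unfold c. rewrite Hc. apply dist_path_to_end. lra. }
  apply Rle_antisym; [pose proof (d_tri d Hm x c y); lra|].
  set (L := h x + h y - 2 * b).
  destruct (Req_dec L 0) as [HL|HL].
  { pose proof (d_nonneg d Hm x y). unfold L in *. lra. }
  assert (Hp0 : branch_path x y 0 = x).
  { unfold branch_path. fold b. destruct Rle_dec; [|lra].
    rewrite Rminus_0_r. apply path_to_end. }
  assert (HpL : branch_path x y L = y).
  { unfold branch_path. fold b. destruct Rle_dec.
    - replace (h x - L) with b by (unfold L in *; lra).
      rewrite Hc. replace b with (h y) by (unfold L in *; lra). apply path_to_end.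
    - replace (L - h x + 2 * b) with (h y) by (unfold L; lra). apply path_to_end. }
  assert (Hpc : branch_path x y (h x - b) = c).
  { unfold branch_path. fold b. destruct Rle_dec; [|lra]. unfold c. f_equal. ring. }
  pose proof (arc_between (branch_path x y) L ltac:(unfold L in *; lra)
                (branch_path_lipschitz x y) (branch_path_injective x y)
                (h x - b) ltac:(unfold L; lra)) as Harc.
  rewrite Hp0, HpL, Hpc in Harc. unfold L. lra.
Qed.

Lemma gromov_branch x y : gromov d o x y = branch x y.
Proof. unfold gromov. rewrite (dist_branch x y). field. Qed.

End Branch.

Lemma R_tree_zero_hyperbolic o : zero_hyperbolic_at d o.
Proof.
  intros x y z. rewrite !gromov_branch.
  destruct (branch_bounds o x y) as [[Hxy0 Hxy] Hyx].
  destruct (branch_bounds o y z) as [[Hyz0 Hyz] Hzy].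
  set (m := Rmin (branch o x y) (branch o y z)).
  assert (m <= branch o x y) by apply Rmin_l.
  assert (m <= branch o y z) by apply Rmin_r.
  assert (0 <= m) by (apply Rmin_glb; lra).
  apply agree_le_branch. repeat split; try lra.
  transitivity (path_to o y m).
  - apply path_to_agree_below with (branch o x y); try lra. apply path_to_agree_branch.
  - apply path_to_agree_below with (branch o y z); try lra. apply path_to_agree_branch.
Qed.

End RTree.

Theorem proposition4p4 (T : Type) (d : T -> T -> R) :
  is_metric d -> is_R_tree d ->
  (forall Rr : R, 0 <= Rr -> Rbar_le (Delta_c d Rr) (Finite (2 * Rr))) /\
  (forall eps : R, 0 < eps ->
     exists (K : Type) (f : T -> (K -> R)),
       (forall t, in_c0plus (f t)) /\
       (forall s t, f s = f t -> s = t) /\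
       exists L1 L2 : R, 0 <= L1 /\ 0 <= L2 /\ L1 * L2 <= 4 + eps /\
         (forall s t, c0dist (f s) (f t) <= L1 * d s t) /\
         (forall s t, d s t <= L2 * c0dist (f s) (f t))).
Proof.
  intros Hm Ht.
  destruct (classic (inhabited T)) as [[o]|Hempty].
  - pose proof (R_tree_zero_hyperbolic d Hm Ht o) as Hhyp.
    pose proof (R_tree_has_segments d Ht o) as Hseg.
    split.
    + intros r Hr. exact (zero_hyperbolic_Delta_c d Hm o Hhyp Hseg r Hr).
    + intros eps Heps. change (c0plus_embeddable d (4 + eps)).
      replace (4 + eps) with (4 + 4 / (4 / eps)) by (field; lra).
      apply (dyadic_embedding_c0plus d Hm o Hhyp Hseg).
      apply Rdiv_lt_0_compat; lra.
  - assert (Hn : T -> False) by (intros t; apply Hempty; constructor; exact t).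
    split.
    + intros r Hr. apply Rbar_le_trans with (Finite 0); [apply Delta_c_empty; auto|].
      simpl. lra.
    + intros eps Heps. apply c0plus_embeddable_empty; [lra|exact Hn].
Qed.
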